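(* Assume (A1), (A2), and that $\{\gamma_n\}_{n\ge1}$ is a deterministic $[0,1)$-valued non-increasing sequence with $\lim\gamma_n=0$ and $\sum_n\gamma_n^2<\infty$. Then for the linearized Wang–Landau algorithm, almost surely, for all $n\ge0$, $$\|\pi_{\theta_n}d\lambda-\pi_{\theta_{n+1}}d\lambda\|_{TV}\le 2d(d-1)\gamma_{n+1},$$ and for every $N\ge0$ and all $n\ge N$, $$\sup_{x\in\mathsf X}\|P_{\theta_n}(x,\cdot)-P_{\theta_{n+1}}(x,\cdot)\|_{TV}\le 4\Big(1+\frac{1}{1-\sup_{j\ge N}\gamma_{j+1}}\Big)\gamma_{n+1}.$$
   Context: Setting: $(\mathsf X,\mathcal X)$ Polish space with Borel $\sigma$-algebra and $\sigma$-finite reference measure $\lambda$; $\pi$ a probability density w.r.t. $\lambda$; $d\ge2$; $\mathsf X_1,\dots,\mathsf X_d$ a measurable partition of $\mathsf X$; $I(x)=i$ iff $x\in\mathsf X_i$; $\theta_\star(i)=\int_{\mathsf X_i}\pi\,d\lambda$; $\Theta=\{\theta\in(0,1)^d:\sum_i\theta(i)=1\}$; $\pi_\theta(x)=\big(\sum_{i}\theta_\star(i)/\theta(i)\big)^{-1}\sum_{i}\frac{\pi(x)}{\theta(i)}\mathbf 1_{\mathsf X_i}(x)$. $\|\mu\|_{TV}=\sup\{|\mu(f)|:\sup|f|\le1\}$. (A1): $0<\inf\pi\le\sup\pi<\infty$ and $\min_i\theta_\star(i)>0$. (A2): $P_\theta$ is the Metropolis–Hastings kernel with target $\pi_\theta\,d\lambda$,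 symmetric proposal density $q$ w.r.t. $\lambda$ with $\inf_{\mathsf X^2}q>0$, acceptance $1\wedge\pi_\theta(y)/\pi_\theta(x)$. Linearized Wang–Landau algorithm: $X_0\in\mathsf X$, $\theta_0\in\Theta$; $X_{n+1}\sim P_{\theta_n}(X_n,\cdot)$ conditionally on $\mathcal F_n=\sigma(\theta_0,X_0,\dots,X_n)$; $\theta_{n+1}=\theta_n+\gamma_{n+1}H(X_{n+1},\theta_n)$ with $H_i(x,\theta)=\theta(i)(\mathbf 1_{\mathsf X_i}(x)-\theta(I(x)))$. *)

From HB Require Import structures.
From mathcomp Require Import all_boot all_order all_algebra.
From mathcomp Require Import all_classical all_reals all_analysis.
Set Implicit Arguments. Unset Strict Implicit. Unset Printing Implicit Defensive.
Import Order.TTheory GRing.Theory Num.Theory.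
Import numFieldNormedType.Exports.
Local Open Scope classical_set_scope.
Local Open Scope ring_scope.

(* Linearized Wang-Landau: auxiliary definitions.
   k  : number of strata (the paper's d),
   I  : T -> 'I_k the stratum index map (X_i = I @^-1` [set i]). *)

Section WL.
Variables (R : realType) (dT : measure_display) (T : measurableType dT).
Variable (lam : {measure set T -> \bar R}).
Variables (k : nat) (I : T -> 'I_k) (pi : T -> R) (q : T -> T -> R).

Definition theta_star (i : 'I_k) : R := Rintegral lam (I @^-1` [set i]) pi.

Definition in_Theta (th : 'I_k -> R) : Prop :=
  (forall i, 0 < th i < 1) /\ \sum_(i < k) th i = 1.

Definition pi_theta (th : 'I_k -> R) (x : T) : R :=
  (\sum_(i < k) theta_star i / th i)^-1 *
  \sum_(i < k) (pi x / th i) * (I x == i)%:R.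

Definition pi_theta_meas (th : 'I_k -> R) (f : T -> R) : R :=
  Rintegral lam setT (fun y => f y * pi_theta th y).

Definition MH_accept (th : 'I_k -> R) (x y : T) : R :=
  Num.min 1 (pi_theta th y / pi_theta th x).

(* Metropolis-Hastings kernel P_theta with target pi_theta dlam and proposal
   density q, acting on functions:
   P_theta f (x) = int f(y) q(x,y) a(x,y) lam(dy) + f(x) (1 - int q(x,y) a(x,y) lam(dy)),
   i.e. P_theta(x,A) = int_A q a dlam + 1_A(x) (1 - int q a dlam). *)
Definition MH_kernel (th : 'I_k -> R) (x : T) (f : T -> R) : R :=
  Rintegral lam setT (fun y => f y * q x y * MH_accept th x y) +
  f x * (1 - Rintegral lam setT (fun y => q x y * MH_accept th x y)).

(* Total variation norm of mu1 - mu2 (finite signed measures given through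
   their action on functions): sup { |mu1 f - mu2 f| : f measurable, sup|f| <= 1 } *)
Definition TV_dist (mu1 mu2 : (T -> R) -> R) : \bar R :=
  ereal_sup [set (`|mu1 f - mu2 f|)%:E | f in
     [set f : T -> R | measurable_fun setT f /\ forall x, `|f x| <= 1]].

Fixpoint WL_theta (gamma : nat -> R) (th0 : 'I_k -> R) (X : nat -> T) (n : nat)
  : 'I_k -> R :=
  match n with
  | 0 => th0
  | m.+1 => fun i => WL_theta gamma th0 X m i +
       gamma m.+1 * (WL_theta gamma th0 X m i *
          ((I (X m.+1) == i)%:R - WL_theta gamma th0 X m (I (X m.+1))))
  end.

End WL.

Definition WL_filtration (R : realType) (dO : measure_display)
  (Omega : measurableType dO) (dT : measure_display) (T : measurableType dT)
  (k : nat) (th0 : Omega -> 'I_k -> R) (X : nat -> Omega -> T) (n : nat)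
  : set (set Omega) :=
  <<s [set B | (exists m (A : set T), (m <= n)%N /\ measurable A /\ B = X m @^-1` A)
            \/ (exists i (A : set R), measurable A /\ B = (fun w => th0 w i) @^-1` A)] >>.

From HB Require Import structures.
From mathcomp Require Import all_boot all_order all_algebra.
From mathcomp Require Import all_classical all_reals all_analysis.
From mathcomp Require Import ring lra measurable_realfun.
Import Order.TTheory GRing.Theory Num.Theory.
Import numFieldNormedType.Exports.
Set Implicit Arguments. Unset Strict Implicit. Unset Printing Implicit Defensive.
Local Open Scope classical_set_scope.
Local Open Scope ring_scope.

(* Both bounds hold pathwise and only use one step of the update.  If X_{n+1}
   lies in stratum a, the step multiplies theta(a) by al = 1 + g (1 - theta(a))
   and every other theta(i) by be = 1 - g theta(a), with al - be = g.  Since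
   pi_theta = pi * Z_theta^-1 / theta(I x), the change of pi_theta is an
   explicit two-block rescaling whose total variation is at most 2 g.  In the
   Metropolis-Hastings ratio pi_theta(y) / pi_theta(x) the normalisations cancel
   and only the factor of the two strata changes, by a ratio within g / (1 - g)
   of 1; since |min 1 (u r) - min 1 u| <= |r - 1|, the acceptance probability,
   and with it each of the two parts of the kernel, moves by at most
   g / (1 - g). *)

Lemma two_block_weight_dist_le (R : realFieldType) (A B g al be : R) :
  0 < A -> 0 <= B -> 0 <= g -> 0 < be -> al = be + g -> 1 <= al ->
  A * `|(A + B)^-1 - (A / al + B / be)^-1 / al| +
  B * `|(A + B)^-1 - (A / al + B / be)^-1 / be| <= 2 * g.
Proof.
move=> A0 B0 g0 be0 ale al1.
have al0 : 0 < al by lra.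
have AB0 : 0 < A + B by lra.
have P0 : 0 < A * be + B * al by nra.
have PP : 0 < (A + B) * (A * be + B * al) by apply: mulr_gt0.
have e1 : (A + B)^-1 - (A / al + B / be)^-1 / al = B * g / ((A + B) * (A * be + B * al)).
  rewrite ale; field.
  by rewrite -ale (gt_eqF P0) (gt_eqF AB0) (gt_eqF al0) (gt_eqF be0).
have e2 : (A + B)^-1 - (A / al + B / be)^-1 / be = - (A * g / ((A + B) * (A * be + B * al))).
  rewrite ale; field.
  by rewrite -ale (gt_eqF P0) (gt_eqF AB0) (gt_eqF al0) (gt_eqF be0).
rewrite e1 e2 normrN !ger0_norm ?divr_ge0 ?mulr_ge0 //; try lra.
have le1 : A * B / ((A + B) * (A * be + B * al)) <= 1.
  by rewrite ler_pdivrMr // mul1r; nra.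
have -> : A * (B * g / ((A + B) * (A * be + B * al))) +
    B * (A * g / ((A + B) * (A * be + B * al))) =
    2 * g * (A * B / ((A + B) * (A * be + B * al))) by rewrite !mulrA; ring.
by rewrite -[leRHS]mulr1 ler_wpM2l //; lra.
Qed.

Lemma dist_min1_scale_le (R : realFieldType) (u r : R) : 0 <= u -> 0 < r ->
  `|Num.min 1 (u * r) - Num.min 1 u| <= `|r - 1|.
Proof.
move=> u0 r0; have [r1|r1] := leP 1 r.
  rewrite (ger0_norm (_ : 0 <= r - 1)); last by lra.
  by have [u1|u1] := leP 1 u; have [ur|ur] := leP 1 (u * r);
    rewrite ler_norml; apply/andP; split; nra.
rewrite (ler0_norm (_ : r - 1 <= 0)); last by lra.
by have [u1|u1] := leP 1 u; have [ur|ur] := leP 1 (u * r);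
  rewrite ler_norml; apply/andP; split; nra.
Qed.

Lemma wl_rate_le (R : realFieldType) (g s : R) : 0 <= g -> g <= s -> s < 1 ->
  2 * (g / (1 - g)) <= 4 * (1 + 1 / (1 - s)) * g.
Proof.
move=> g0 gs s1.
have h : g / (1 - g) <= g / (1 - s) by apply: ler_wpM2l => //; rewrite lef_pV2 ?posrE; lra.
have t0 : 0 <= (1 - s)^-1 by rewrite invr_ge0; lra.
by rewrite div1r; nra.
Qed.

Section SimplexStep.
Variables (R : realFieldType) (k : nat).
Implicit Types (th ts : 'I_k -> R) (g : R) (a i j : 'I_k).

Definition pos_simplex th := (forall i, 0 < th i) /\ \sum_(i < k) th i = 1.

Definition wl_step th g a : 'I_k -> R :=
  fun i => th i + g * (th i * ((a == i)%:R - th a)).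

Definition wl_factor th g a i := 1 + g * ((a == i)%:R - th a).

(* [stratum_weight ts th i] is the density of pi_theta relative to pi on the
   stratum i, where [ts] plays the role of theta_star. *)
Definition stratum_norm ts th := \sum_(i < k) ts i / th i.

Definition stratum_weight ts th i := (stratum_norm ts th)^-1 / th i.

Lemma sum_mul_indicator th a : \sum_(i < k) th i * (a == i)%:R = th a.
Proof.
rewrite (bigD1 a) //= eqxx mulr1 big1 ?addr0 // => i /negPf.
by rewrite eq_sym => ->; rewrite mulr0.
Qed.

Lemma pos_simplex_le1 th i : pos_simplex th -> th i <= 1.
Proof.
case=> th0 <-; rewrite (bigD1 i) //= lerDl sumr_ge0 // => j _.
exact: ltW.
Qed.

Lemma wl_stepE th g a i : wl_step th g a i = th i * wl_factor th g a i.
Proof. by rewrite /wl_step /wl_factor; ring. Qed.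

Lemma wl_factor_ge th g a i : pos_simplex th -> 0 <= g < 1 ->
  1 - g <= wl_factor th g a i.
Proof.
move=> Hth /andP[g0 g1]; have := pos_simplex_le1 a Hth; have [th0 _] := Hth.
by have := th0 a; rewrite /wl_factor; case: (a == i) => /= ? ?; nra.
Qed.

Lemma wl_factor_gt0 th g a i : pos_simplex th -> 0 <= g < 1 ->
  0 < wl_factor th g a i.
Proof.
move=> Hth hg; have := wl_factor_ge a i Hth hg.
by case/andP: hg => _ g1; lra.
Qed.

Lemma pos_simplex_wl_step th g a : pos_simplex th -> 0 <= g < 1 ->
  pos_simplex (wl_step th g a).
Proof.
move=> Hth hg; have [th0 th1] := Hth; split.
  by move=> i; rewrite wl_stepE mulr_gt0 // wl_factor_gt0.
rewrite big_split /= th1 -mulr_sumr.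
under eq_bigr do rewrite mulrBr.
rewrite sumrB -mulr_suml th1 mul1r.
rewrite (eq_bigr (fun i => th i * (a == i)%:R)); last by move=> i _; rewrite mulrC.
by rewrite sum_mul_indicator subrr mulr0 addr0.
Qed.

Lemma wl_factor_ratio_dist th g a i j : pos_simplex th -> 0 <= g < 1 ->
  `|wl_factor th g a j / wl_factor th g a i - 1| <= g / (1 - g).
Proof.
move=> Hth hg; have mi := wl_factor_ge a i Hth hg.
have [th0 _] := Hth; have tha := th0 a; have tha1 := pos_simplex_le1 a Hth.
case/andP: hg => g0 g1.
set mj := wl_factor th g a j; set m := wl_factor th g a i in mi *.
have m0 : 0 < m by lra.
have -> : mj / m - 1 = (mj - m) / m by field; rewrite gt_eqF.
rewrite normrM (gtr0_norm (_ : 0 < m^-1)) ?invr_gt0 //.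
apply: (le_trans (y := g / m)).
  apply: ler_wpM2r; first by rewrite invr_ge0 ltW.
  rewrite /mj /m /wl_factor ler_norml; case: (a == i); case: (a == j) => /=;
    apply/andP; split; nra.
by apply: ler_wpM2l => //; rewrite lef_pV2 ?posrE //; lra.
Qed.

Lemma stratum_norm_gt0 ts th i0 : (forall i, 0 < ts i) -> (forall i, 0 < th i) ->
  0 < stratum_norm ts th.
Proof.
move=> ts0 th0; rewrite /stratum_norm (bigD1 i0) //=.
by rewrite ltr_pwDl ?divr_gt0 // sumr_ge0 // => i _; rewrite divr_ge0 // ltW.
Qed.

Lemma sum_stratum_weight_dist_rescale ts th a (al be : R) :
  (forall i, 0 < th i) ->
  let th' := fun i => th i * (if a == i then al else be) in
  let A := ts a / th a in
  let B := \sum_(i < k | i != a) ts i / th i in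
  \sum_(i < k) ts i * `|stratum_weight ts th i - stratum_weight ts th' i| =
  A * `|(A + B)^-1 - (A / al + B / be)^-1 / al| +
  B * `|(A + B)^-1 - (A / al + B / be)^-1 / be|.
Proof.
move=> th0 th' A B.
have ZE : stratum_norm ts th = A + B by rewrite /stratum_norm (bigD1 a).
have Z'E : stratum_norm ts th' = A / al + B / be.
  rewrite /stratum_norm (bigD1 a) //= /th' eqxx invfM mulrA; congr (_ + _).
  rewrite /B mulr_suml; apply: eq_bigr => i ia.
  by rewrite eq_sym (negPf ia) invfM mulrA.
have termE i (c : R) :
    ts i * `|(A + B)^-1 / th i - (A / al + B / be)^-1 / (th i * c)| =
    ts i / th i * `|(A + B)^-1 - (A / al + B / be)^-1 / c|.
  rewrite invfM mulrA [_ * (th i)^-1 * _]mulrAC -mulrBl normrM.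
  by rewrite (gtr0_norm (_ : 0 < (th i)^-1)) ?invr_gt0 // mulrA mulrAC.
rewrite (bigD1 a) //= /stratum_weight ZE Z'E /th' eqxx /= termE -/A.
congr (_ + _); rewrite -[RHS]/((\sum_(i < k | i != a) ts i / th i) * _).
rewrite [(\sum_(i < k | i != a) _) * `|_|]mulr_suml.
by apply: eq_bigr => i ia; rewrite eq_sym (negPf ia) termE.
Qed.

Lemma sum_stratum_weight_wl_step_le ts th g a :
  (forall i, 0 < ts i) -> pos_simplex th -> 0 <= g < 1 ->
  \sum_(i < k) ts i * `|stratum_weight ts th i - stratum_weight ts (wl_step th g a) i|
    <= 2 * g.
Proof.
move=> ts0 Hth /andP[g0 g1]; have [th0 _] := Hth.
have tha1 := pos_simplex_le1 a Hth; have tha0 := th0 a.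
set al := 1 + g * (1 - th a); set be := 1 - g * th a.
have -> : wl_step th g a = fun i => th i * (if a == i then al else be).
  apply/funext => i; rewrite wl_stepE /wl_factor.
  by case: (a == i) => /=; rewrite /al /be; ring.
rewrite sum_stratum_weight_dist_rescale //.
apply: two_block_weight_dist_le => //; rewrite /al /be.
- exact: divr_gt0.
- by apply: sumr_ge0 => i _; rewrite divr_ge0 // ltW.
- by nra.
- by ring.
- by nra.
Qed.

End SimplexStep.

Lemma WL_thetaS (R : realType) (dT : measure_display) (T : measurableType dT)
    (k : nat) (I : T -> 'I_k) (gamma : nat -> R) (th0 : 'I_k -> R) (X : nat -> T) n :
  WL_theta I gamma th0 X n.+1 = wl_step (WL_theta I gamma th0 X n) (gamma n.+1) (I (X n.+1)).
Proof. by []. Qed.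

Lemma WL_theta_pos_simplex (R : realType) (dT : measure_display) (T : measurableType dT)
    (k : nat) (I : T -> 'I_k) (gamma : nat -> R) (th0 : 'I_k -> R) (X : nat -> T) :
  (forall n, 0 <= gamma n.+1 < 1) -> pos_simplex th0 ->
  forall n, pos_simplex (WL_theta I gamma th0 X n).
Proof.
by move=> gam1 H0; elim=> [|n ih] //; rewrite WL_thetaS; apply: pos_simplex_wl_step.
Qed.

Lemma in_Theta_pos_simplex (R : realType) (k : nat) (th : 'I_k -> R) :
  in_Theta th -> pos_simplex th.
Proof. by case=> th01 th1; split=> // i; have /andP[] := th01 i. Qed.

Lemma tail_sup_bounds (R : realType) (gamma : nat -> R) (N n : nat) :
  (forall n, (1 <= n)%N -> 0 <= gamma n < 1) ->
  (forall n, (1 <= n)%N -> gamma n.+1 <= gamma n) -> (N <= n)%N ->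
  let s := sup [set gamma j.+1 | j in [set j | (N <= j)%N]] in
  gamma n.+1 <= s /\ s < 1.
Proof.
move=> gam gdec Nn s.
have gamma_le m d : (1 <= m)%N -> gamma (m + d)%N <= gamma m.
  move=> m1; elim: d => [|d ih]; first by rewrite addn0.
  by rewrite addnS (le_trans _ ih) // gdec // addn_gt0 m1.
split.
  apply: ub_le_sup; last by exists n.
  by exists 1 => _ [j _ <-]; have /andP[_ /ltW] := gam j.+1 (ltn0Sn j).
apply: (@le_lt_trans _ _ (gamma N.+1)); last by have /andP[] := gam N.+1 (ltn0Sn N).
apply: ge_sup; first by exists (gamma N.+1); exists N => /=.
by move=> _ [j /= Nj <-]; rewrite -(subnKC Nj) -addSn gamma_le.
Qed.

Section Integrals.
Variables (R : realType) (dT : measure_display) (T : measurableType dT).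
Variable lam : {measure set T -> \bar R}.

Lemma integrable_dominated (p f : T -> R) (M : R) :
  lam.-integrable setT (EFin \o p) -> measurable_fun setT f ->
  (forall x, `|f x| <= M * p x) -> lam.-integrable setT (EFin \o f).
Proof.
move=> ip mf fle.
apply: (le_integrable measurableT _ _ (integrableZl measurableT M ip)).
  exact/measurable_EFinP.
by move=> x _ /=; rewrite lee_fin (le_trans (fle x)) // ler_norm.
Qed.

Lemma integrable_density (p : T -> R) : measurable_fun setT p -> (forall x, 0 <= p x) ->
  (\int[lam]_x (p x)%:E = 1)%E -> lam.-integrable setT (EFin \o p).
Proof.
move=> mp p0 ip; apply/integrableP; split; first exact/measurable_EFinP.
by under eq_integral do rewrite /= ger0_norm //; rewrite ip ltry.
Qed.

Lemma Rintegral_sum (J : Type) (s : seq J) (F : J -> T -> R) :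
  (forall j, lam.-integrable setT (EFin \o F j)) ->
  lam.-integrable setT (EFin \o (fun x => \sum_(j <- s) F j x)) /\
  Rintegral lam setT (fun x => \sum_(j <- s) F j x) = \sum_(j <- s) Rintegral lam setT (F j).
Proof.
move=> iF; elim: s => [|j s [ih eh]].
  split.
    apply: (eq_integrable measurableT (cst 0%E)); last exact: integrable0.
    by move=> x _ /=; rewrite big_nil.
  under eq_Rintegral do rewrite big_nil.
  by rewrite Rintegral_cst // mul0r big_nil.
split.
  apply: (eq_integrable measurableT _ _ _ (integrableD measurableT (iF j) ih)).
  by move=> x _ /=; rewrite big_cons EFinD.
under eq_Rintegral do rewrite big_cons.
by rewrite RintegralD // ?eh ?big_cons.
Qed.

Lemma normr_Rintegral_le_density (p F : T -> R) (e : R) :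
  measurable_fun setT p -> (forall x, 0 <= p x) -> (\int[lam]_x (p x)%:E = 1)%E ->
  measurable_fun setT F -> (forall y, `|F y| <= e * p y) ->
  `|Rintegral lam setT F| <= e.
Proof.
move=> mp p0 ip mF Fle; have ipI := integrable_density mp p0 ip.
have Fle' y : `|F y| <= `|e| * p y by rewrite (le_trans (Fle y)) // ler_wpM2r // ler_norm.
apply: le_trans (le_normr_Rintegral measurableT (integrable_dominated ipI mF Fle')) _.
apply: (le_trans (y := Rintegral lam setT (fun y => e * p y))).
  apply: le_Rintegral => //.
  - apply: (integrable_dominated ipI); last by move=> y; rewrite normr_id.
    exact: measurableT_comp (@normr_measurable R setT) mF.
  - apply: (integrable_dominated ipI); first exact: measurable_funM.
    by move=> y; rewrite normrM (ger0_norm (p0 y)).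
have Rp : Rintegral lam setT p = 1 by rewrite /Rintegral ip.
by rewrite RintegralZl // Rp mulr1.
Qed.

End Integrals.

Section PiTheta.
Variables (R : realType) (dT : measure_display) (T : measurableType dT).
Variable lam : {measure set T -> \bar R}.
Variables (k : nat) (I : T -> 'I_k) (pi : T -> R).
Hypothesis mI : forall i : 'I_k, measurable (I @^-1` [set i]).
Hypothesis mpi : measurable_fun setT pi.
Hypothesis pi0 : forall x, 0 <= pi x.
Hypothesis ipi : (\int[lam]_x (pi x)%:E = 1)%E.

Let ts := theta_star lam I pi.

Lemma measurable_fun_stratum (h : 'I_k -> R) : measurable_fun setT (fun x => h (I x)).
Proof.
move=> _ Y mY; rewrite setTI.
have -> : (fun x => h (I x)) @^-1` Y = \bigcup_(i in [set i | Y (h i)]) I @^-1` [set i].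
  by apply/seteqP; split => x /=; [exists (I x) | case=> i /= Yi ->].
by apply: fin_bigcup_measurable => //; exact: finite_finset.
Qed.

Lemma integrable_pi_le (f : T -> R) (M : R) : measurable_fun setT f ->
  (forall x, `|f x| <= M * pi x) -> lam.-integrable setT (EFin \o f).
Proof. exact: integrable_dominated (integrable_density mpi pi0 ipi). Qed.

Lemma integrable_pi_stratum (f : T -> R) (h : 'I_k -> R) :
  measurable_fun setT f -> (forall x, `|f x| <= 1) ->
  lam.-integrable setT (EFin \o (fun x => f x * (pi x * h (I x)))).
Proof.
move=> mf fb; apply: (@integrable_pi_le _ (\sum_(i < k) `|h i|)).
  by apply: measurable_funM => //; apply: measurable_funM => //; exact: measurable_fun_stratum.
move=> x; rewrite !normrM (ger0_norm (pi0 x)) [leRHS]mulrC mulrCA ler_wpM2l //.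
apply: le_trans (ler_piMl _ (fb x)) _ => //.
by rewrite (bigD1 (I x)) //= lerDl sumr_ge0.
Qed.

Lemma theta_starE i : ts i = Rintegral lam setT (fun x => pi x * (I x == i)%:R).
Proof.
rewrite /ts /theta_star Rintegral_mkcond; apply: eq_Rintegral => x _.
rewrite patchE; case: (boolP (x \in _)) => [/set_mem /= -> | /negP hx].
  by rewrite eqxx mulr1.
by case: eqP => [e|_]; [exfalso; apply: hx; exact/mem_set | rewrite mulr0].
Qed.

Lemma Rintegral_pi_stratum (h : 'I_k -> R) :
  Rintegral lam setT (fun x => pi x * h (I x)) = \sum_(i < k) ts i * h i.
Proof.
have mind i : measurable_fun setT (fun x => pi x * (I x == i)%:R).
  by apply: measurable_funM => //; exact: (measurable_fun_stratum (fun j => (j == i)%:R)).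
have ind_le i x : `|pi x * (I x == i)%:R| <= pi x.
  rewrite normrM (ger0_norm (pi0 x)).
  by case: (I x == i); rewrite /= ?normr1 ?normr0 ?mulr1 ?mulr0.
have iind i : lam.-integrable setT (EFin \o (fun x => pi x * (I x == i)%:R)).
  by apply: (@integrable_pi_le _ 1 (mind i)) => x; rewrite mul1r ind_le.
have iF i : lam.-integrable setT (EFin \o (fun x => h i * (pi x * (I x == i)%:R))).
  apply: (@integrable_pi_le _ `|h i|); first exact: measurable_funM.
  by move=> x; rewrite normrM ler_wpM2l ?ind_le.
have -> : Rintegral lam setT (fun x => pi x * h (I x)) =
    Rintegral lam setT (fun x => \sum_(i < k) h i * (pi x * (I x == i)%:R)).
  apply: eq_Rintegral => x _; rewrite -(sum_mul_indicator h (I x)) mulr_sumr.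
  by apply: eq_bigr => i _; rewrite mulrCA.
have [_ ->] := Rintegral_sum (index_enum 'I_k) iF.
by apply: eq_bigr => i _; rewrite RintegralZl // theta_starE mulrC.
Qed.

Lemma normr_Rintegral_le_stratum (F : T -> R) (h : 'I_k -> R) :
  measurable_fun setT F -> (forall x, `|F x| <= pi x * h (I x)) ->
  `|Rintegral lam setT F| <= \sum_(i < k) ts i * h i.
Proof.
move=> mF Fle; set M := \sum_(i < k) `|h i|.
have hM x : `|h (I x)| <= M by rewrite /M (bigD1 (I x)) //= lerDl sumr_ge0.
have Fle' x : `|F x| <= M * pi x.
  by rewrite (le_trans (Fle x)) // mulrC ler_wpM2r // (le_trans (ler_norm _)).
rewrite -Rintegral_pi_stratum.
apply: le_trans (le_normr_Rintegral measurableT (integrable_pi_le mF Fle')) _.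
apply: le_Rintegral => //.
- apply: (@integrable_pi_le _ M); last by move=> x; rewrite normr_id.
  exact: measurableT_comp (@normr_measurable R setT) mF.
- apply: (@integrable_pi_le _ M).
    by apply: measurable_funM => //; exact: measurable_fun_stratum.
  by move=> x; rewrite normrM (ger0_norm (pi0 x)) mulrC ler_wpM2r.
Qed.

Lemma pi_thetaE th x : pi_theta lam I pi th x = pi x * stratum_weight ts th (I x).
Proof.
rewrite /pi_theta (sum_mul_indicator (fun i => pi x / th i)).
by rewrite /stratum_weight /stratum_norm mulrCA.
Qed.

Lemma TV_pi_theta_wl_step_le th g a :
  (forall i, 0 < ts i) -> pos_simplex th -> 0 <= g < 1 ->
  (TV_dist (pi_theta_meas lam I pi th) (pi_theta_meas lam I pi (wl_step th g a))
    <= (2 * g)%:E)%E.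
Proof.
move=> ts0 Hth hg; apply/ereal_supP => _ [f [mf fb] <-]; rewrite lee_fin /pi_theta_meas.
set w := stratum_weight ts.
under eq_Rintegral do rewrite pi_thetaE -/w.
under [X in _ - X]eq_Rintegral do rewrite pi_thetaE -/w.
rewrite -RintegralB //; try exact: integrable_pi_stratum.
apply: (le_trans _ (sum_stratum_weight_wl_step_le a ts0 Hth hg)).
apply: (normr_Rintegral_le_stratum (h := fun i => `|w th i - w (wl_step th g a) i|)).
  apply: measurable_funB; apply: measurable_funM => //;
    by apply: measurable_funM => //; exact: measurable_fun_stratum.
move=> x; rewrite -!mulrBr !normrM (ger0_norm (pi0 x)).
by apply: ler_piMl => //; rewrite mulr_ge0.
Qed.

Hypothesis pi_gt0 : forall x, 0 < pi x.
Hypothesis ts_gt0 : forall i, 0 < ts i.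

Lemma pi_theta_gt0 th x : pos_simplex th -> 0 < pi_theta lam I pi th x.
Proof.
case=> th0 _; rewrite pi_thetaE mulr_gt0 // divr_gt0 //.
by rewrite invr_gt0 (stratum_norm_gt0 (I x)).
Qed.

Lemma measurable_pi_theta th : measurable_fun setT (pi_theta lam I pi th).
Proof.
rewrite (_ : pi_theta lam I pi th = fun y => pi y * stratum_weight ts th (I y)).
  by apply: measurable_funM => //; exact: measurable_fun_stratum.
by apply/funext => y; rewrite pi_thetaE.
Qed.

Lemma measurable_MH_accept th x : measurable_fun setT (MH_accept lam I pi th x).
Proof.
apply: (measurable_minr (measurable_cst _)).
by apply: measurable_funM; [exact: measurable_pi_theta | exact: measurable_cst].
Qed.

Lemma MH_accept_bounds th x y : pos_simplex th -> 0 <= MH_accept lam I pi th x y <= 1.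
Proof.
move=> Hth; rewrite /MH_accept ge_min lexx orTb andbT le_min ler01.
by rewrite divr_ge0 // ltW // pi_theta_gt0.
Qed.

Lemma MH_accept_wl_step_dist th g a x y : pos_simplex th -> 0 <= g < 1 ->
  `|MH_accept lam I pi th x y - MH_accept lam I pi (wl_step th g a) x y| <= g / (1 - g).
Proof.
move=> Hth hg; have Hth' := pos_simplex_wl_step a Hth hg; have [th0 _] := Hth.
set mx := wl_factor th g a (I x); set my := wl_factor th g a (I y).
have mx0 : 0 < mx by exact: wl_factor_gt0.
have my0 : 0 < my by exact: wl_factor_gt0.
set u := pi_theta lam I pi th y / pi_theta lam I pi th x.
have u0 : 0 <= u by rewrite divr_ge0 // ltW // pi_theta_gt0.
have ratioE : pi_theta lam I pi (wl_step th g a) y / pi_theta lam I pi (wl_step th g a) x =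
    u * (mx / my).
  rewrite /u !pi_thetaE /stratum_weight !wl_stepE -/mx -/my.
  have Z0 := stratum_norm_gt0 (I x) ts_gt0 th0.
  have Z0' := stratum_norm_gt0 (I x) ts_gt0 Hth'.1.
  have tx := th0 (I x); have ty := th0 (I y); have px := pi_gt0 x; have py := pi_gt0 y.
  by field; rewrite (gt_eqF my0) (gt_eqF tx) (gt_eqF Z0) (gt_eqF px) (gt_eqF ty)
    (gt_eqF mx0) (gt_eqF Z0').
rewrite /MH_accept ratioE distrC.
apply: le_trans (dist_min1_scale_le u0 (divr_gt0 mx0 my0)) _.
exact: wl_factor_ratio_dist.
Qed.

Variable q : T -> T -> R.
Hypothesis mq : measurable_fun setT (fun xy : T * T => q xy.1 xy.2).
Hypothesis iq : forall x, (\int[lam]_y (q x y)%:E = 1)%E.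
Hypothesis q0 : forall x y, 0 <= q x y.

Let mqx x : measurable_fun setT (q x) := measurable_fun_pair2 x mq.

Lemma Rintegral_accept_wl_step_dist th g a x (f : T -> R) :
  pos_simplex th -> 0 <= g < 1 -> measurable_fun setT f -> (forall y, `|f y| <= 1) ->
  `|Rintegral lam setT (fun y => f y * q x y * MH_accept lam I pi th x y) -
    Rintegral lam setT (fun y => f y * q x y * MH_accept lam I pi (wl_step th g a) x y)|
    <= g / (1 - g).
Proof.
move=> Hth hg mf fb; have Hth' := pos_simplex_wl_step a Hth hg.
have ipq := integrable_density (mqx x) (q0 x) (iq x).
have macc t : measurable_fun setT (fun y => f y * q x y * MH_accept lam I pi t x y).
  by apply: measurable_funM; [exact: measurable_funM | exact: measurable_MH_accept].
have fq_le y : `|f y * q x y| <= q x y.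
  by rewrite normrM (ger0_norm (q0 x y)) ler_piMl.
have iacc t : pos_simplex t ->
    lam.-integrable setT (EFin \o (fun y => f y * q x y * MH_accept lam I pi t x y)).
  move=> Ht; apply: (integrable_dominated (M := 1) ipq (macc t)) => y.
  have /andP[A0 A1] := MH_accept_bounds x y Ht.
  rewrite normrM (ger0_norm A0) mul1r (le_trans _ (fq_le y)) //.
  by rewrite ler_piMr.
rewrite -RintegralB ?iacc //.
apply: (normr_Rintegral_le_density (mqx x) (q0 x) (iq x)).
  exact: measurable_funB.
move=> y; rewrite -mulrBr normrM mulrC.
by apply: ler_pM => //; exact: MH_accept_wl_step_dist.
Qed.

Lemma TV_MH_kernel_wl_step_le th g a x : pos_simplex th -> 0 <= g < 1 ->
  (TV_dist (MH_kernel lam I pi q th x) (MH_kernel lam I pi q (wl_step th g a) x)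
    <= (2 * (g / (1 - g)))%:E)%E.
Proof.
move=> Hth hg; apply/ereal_supP => _ [f [mf fb] <-]; rewrite lee_fin /MH_kernel.
have rejE t : Rintegral lam setT (fun y => q x y * MH_accept lam I pi t x y) =
    Rintegral lam setT (fun y => 1 * q x y * MH_accept lam I pi t x y).
  by apply: eq_Rintegral => y _; rewrite mul1r.
have diffE (u v u' v' c : R) : u + c * (1 - v) - (u' + c * (1 - v')) = u - u' - c * (v - v').
  by ring.
rewrite !rejE diffE (le_trans (ler_normB _ _)) // normrM mulr2n mulrDl mul1r.
apply: lerD; first exact: Rintegral_accept_wl_step_dist.
rewrite -[leRHS]mul1r; apply: ler_pM => //.
apply: (@Rintegral_accept_wl_step_dist th g a x (fun=> 1) Hth hg (measurable_cst _)).
by move=> _; rewrite normr1.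
Qed.

End PiTheta.

Theorem mainTheorem14
  (R : realType) (dT : measure_display) (T : measurableType dT)
  (lam : {measure set T -> \bar R}) (k : nat) (I : T -> 'I_k)
  (pi : T -> R) (q : T -> T -> R) (gamma : nat -> R)
  (dO : measure_display) (Omega : measurableType dO) (P : probability Omega R)
  (th0 : Omega -> 'I_k -> R) (X : nat -> Omega -> T) :
  (* setting *)
  sigma_finite setT lam ->
  (2 <= k)%N ->
  (forall i : 'I_k, measurable (I @^-1` [set i])) ->
  measurable_fun setT pi -> (forall x, 0 <= pi x) ->
  (\int[lam]_x (pi x)%:E = 1)%E ->
  (* (A1) *)
  (exists c : R, 0 < c /\ forall x, c <= pi x) ->
  (exists C : R, forall x, pi x <= C) ->
  (forall i, 0 < theta_star lam I pi i) ->
  (* (A2): symmetric proposal density with positive infimum *)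
  measurable_fun setT (fun xy : T * T => q xy.1 xy.2) ->
  (forall x, (\int[lam]_y (q x y)%:E = 1)%E) ->
  (forall x y, q x y = q y x) ->
  (exists c : R, 0 < c /\ forall x y, c <= q x y) ->
  (* step sizes *)
  (forall n, (1 <= n)%N -> 0 <= gamma n < 1) ->
  (forall n, (1 <= n)%N -> gamma n.+1 <= gamma n) ->
  gamma @ \oo --> 0 ->
  cvg (series (fun n => gamma n ^+ 2) @ \oo) ->
  (* the linearized Wang-Landau process *)
  (forall n, measurable_fun setT (X n)) ->
  (forall i, measurable_fun setT (fun w => th0 w i)) ->
  (forall w, in_Theta (th0 w)) ->
  (forall n (f : T -> R) (B : set Omega),
      measurable_fun setT f -> (forall x, `|f x| <= 1) ->
      WL_filtration th0 X n B ->
      (\int[P]_(w in B) (f (X n.+1 w))%:E =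
       \int[P]_(w in B)
          (MH_kernel lam I pi q (WL_theta I gamma (th0 w) (X^~ w) n) (X n w) f)%:E)%E) ->
  {ae P, forall w,
     let theta := WL_theta I gamma (th0 w) (X^~ w) in
     (forall n,
        (TV_dist (pi_theta_meas lam I pi (theta n)) (pi_theta_meas lam I pi (theta n.+1))
         <= (2 * k%:R * (k%:R - 1) * gamma n.+1)%:E)%E) /\
     (forall N n, (N <= n)%N ->
        (ereal_sup [set TV_dist (MH_kernel lam I pi q (theta n) x)
                                (MH_kernel lam I pi q (theta n.+1) x) | x in [set: T]]
         <= (4 * (1 + 1 / (1 - sup [set gamma j.+1 | j in [set j | (N <= j)%N]]))
               * gamma n.+1)%:E)%E)}.
Proof.
(* The bounds hold along every path. *)
move=> _ k2 mI mpi pi0 ipi [c [c0 cpi]] _ ts0 mq iq _ [cq [cq0 cqq]]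
  gam gdec _ _ _ _ th0T _.
have pi_gt0 x : 0 < pi x := lt_le_trans c0 (cpi x).
have q_ge0 x y : 0 <= q x y := le_trans (ltW cq0) (cqq x y).
have gam1 n : 0 <= gamma n.+1 < 1 := gam n.+1 (ltn0Sn n).
apply: aeW => w.
have Hth := WL_theta_pos_simplex I (X^~ w) gam1 (in_Theta_pos_simplex (th0T w)).
split=> [n | N n Nn]; rewrite WL_thetaS.
  apply: le_trans (TV_pi_theta_wl_step_le mI mpi pi0 ipi _ ts0 (Hth n) (gam1 n)) _.
  have [g0 _] := andP (gam1 n); have k2R : 2 <= k%:R :> R by rewrite (ler_nat R 2 k).
  have kk : 1 <= k%:R * (k%:R - 1) :> R by nra.
  by have := ler_wpM2l g0 kk; rewrite lee_fin; nra.
apply/ereal_supP => _ [x _ <-].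
apply: le_trans (TV_MH_kernel_wl_step_le mI mpi pi_gt0 ts0 mq iq q_ge0 _ x (Hth n) (gam1 n)) _.
have [gs s1] := tail_sup_bounds gam gdec Nn.
by rewrite lee_fin wl_rate_le //; case/andP: (gam1 n).
Qed.
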